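(* Let $P$ be a finite poset with $b$ bottlenecks, and let $\mathcal{S}$ denote the set of all convex subsets of $P$ with exactly one interior element. Then $$\sum_{S\in\mathcal{S}}(-1)^{|S|}=-b.$$
   Context: A subset $I\subseteq P$ is an order ideal if $x\in I$ and $y\le x$ imply $y\in I$; a subset $J\subseteq P$ is an order filter if $x\in J$ and $y\ge x$ imply $y\in J$. A subset $C\subseteq P$ is convex (in the double shelling antimatroid of $P$) if $C=P\setminus(I\cup J)$ for some order ideal $I$ and order filter $J$. An element $x$ of a convex set $C$ is interior to $C$ if it is neither a minimal nor a maximal element of $C$ (equivalently, there are $a,c\in C$ with $a<x<c$). A bottleneck of $P$ is an element that is neither maximal nor minimal in $P$ but is comparable to every element of $P$. *)

From HB Require Import structures.
From mathcomp Require Import all_boot all_order all_algebra.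
Set Implicit Arguments. Unset Strict Implicit. Unset Printing Implicit Defensive.
Import Order.TTheory GRing.Theory Num.Theory.
Local Open Scope order_scope.

Section Defs.
Context {d : Order.disp_t} {T : finPOrderType d}.

Definition order_ideal (I : {set T}) : bool :=
  [forall x, forall y, (x \in I) && (y <= x) ==> (y \in I)].

Definition order_filter (J : {set T}) : bool :=
  [forall x, forall y, (x \in J) && (x <= y) ==> (y \in J)].

(* C is convex in the double shelling antimatroid: C = P \ (I u J). *)
Definition ds_convex (C : {set T}) : bool :=
  [exists I : {set T}, exists J : {set T},
     [&& order_ideal I, order_filter J & C == ~: (I :|: J)]].

Definition interior_elt (C : {set T}) (x : T) : bool :=
  (x \in C) && [exists a, [exists c, [&& a \in C, c \in C, a < x & x < c]]].

Definition interior (C : {set T}) : {set T} := [set x | interior_elt C x].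

Definition bottleneck (x : T) : bool :=
  [exists a, a < x] && [exists c, x < c] && [forall y, x >=< y].

Definition bottlenecks : {set T} := [set x | bottleneck x].
End Defs.

From HB Require Import structures.
From mathcomp Require Import all_boot all_order all_algebra.
Import Order.TTheory GRing.Theory Num.Theory.

(* Call S flat in W when S is a subset of W and no element of W lies strictly
   between two elements of S, i.e. S is convex in W and has no interior.  For
   every W the signed count of flat subsets of W is [W = set0]: toggling a
   maximal element of the part of W strictly below S (or, when that part is
   empty, a fixed minimal element of W) is a sign-reversing involution.
   A convex set with interior {x} is x |: S' with S' flat in P :\ x and x
   strictly between two elements of S'.  Its signed count is thus a
   combination of the flat counts for P :\ x and P, and, since a flat set
   through x lies entirely in {y | ~~ (y < x)} or in {y | ~~ (x < y)}, of the
   flat counts for these two sets and their intersection.  The resulting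
   combination of indicators is exactly minus the indicator that x is a
   bottleneck. *)

Local Notation sgn S := ((-1 : int) ^+ #|S|)%R.

Lemma sumr_sign_reversing (R : numDomainType) (I : finType) (P : pred I)
    (F : I -> R) (f : I -> I) :
  {in P, forall i, P (f i)} -> {in P, involutive f} ->
  {in P, forall i, F (f i) = - F i}%R -> (\sum_(i | P i) F i = 0)%R.
Proof.
move=> fP fK Ff; pose g i := if P i then f i else i.
have Pg i : P (g i) = P i by rewrite /g; case: ifP => // Pi; rewrite fP.
have gK : involutive g.
  by move=> i; rewrite /g; case Pi: (P i); [rewrite fP ?fK | rewrite Pi].
have : (\sum_(i | P i) F i = - \sum_(i | P i) F i)%R.
  rewrite [LHS](reindex_inj (inv_inj gK)) -sumrN /=.
  by apply: eq_big => [i|i]; rewrite ?Pg // /g => Pi; rewrite Pi Ff.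
by move/eqP; rewrite -subr_eq0 opprK -mulr2n mulrn_eq0 => /eqP.
Qed.

Lemma sumr_orb (R : zmodType) (I : finType) (P A B : pred I) (F : I -> R) :
  (\sum_(i | P i && (A i || B i)) F i =
   \sum_(i | P i && A i) F i + \sum_(i | P i && B i) F i
   - \sum_(i | P i && (A i && B i)) F i)%R.
Proof.
rewrite [LHS](bigID A) (bigID A (fun i => P i && B i)) /=.
have -> : (\sum_(i | P i && (A i || B i) && A i) F i = \sum_(i | P i && A i) F i)%R.
  by apply: eq_bigl => i /=; case: (A i); rewrite ?andbT ?andbF.
have -> : (\sum_(i | P i && (A i || B i) && ~~ A i) F i
          = \sum_(i | P i && B i && ~~ A i) F i)%R.
  by apply: eq_bigl => i /=; case: (A i); rewrite ?andbT ?andbF.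
have -> : (\sum_(i | P i && B i && A i) F i = \sum_(i | P i && (A i && B i)) F i)%R.
  by apply: eq_bigl => i /=; rewrite andbAC andbA.
by rewrite addrA addrAC addrK.
Qed.

Lemma exists_maximal (X : finType) (r : rel X) (A : {set X}) :
  irreflexive r -> transitive r -> A != set0 ->
  exists2 e, e \in A & forall y, y \in A -> ~~ r e y.
Proof.
move=> irr tr /set0Pn[a aA].
have [e eA emin] := arg_minnP (fun e => #|[set y in A | r e y]|) aA.
exists e => // y yA; apply/negP => ey.
suff: #|[set z in A | r y z]| < #|[set z in A | r e z]| by rewrite ltnNge emin.
apply: proper_card; apply/properP; split.
  by apply/subsetP => z; rewrite !inE => /andP[-> /(tr _ _ _ ey)].
by exists y; rewrite !inE ?yA ?ey ?irr.
Qed.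

Section Toggle.
Context {X : finType}.
Implicit Types (S : {set X}) (x : X).

Definition toggle S x := [set y | (y == x) (+) (y \in S)].

Lemma toggleK S x : toggle (toggle S x) x = S.
Proof. by apply/setP => y; rewrite !inE addKb. Qed.

Lemma toggleE S x : toggle S x = if x \in S then S :\ x else x |: S.
Proof.
by apply/setP => y; case: ifP => xS; rewrite !inE; case: eqVneq => // ->; rewrite xS.
Qed.

Lemma signr_toggle S x : sgn (toggle S x) = (- sgn S)%R.
Proof.
rewrite toggleE; case: ifP => xS; last by rewrite cardsU1 xS exprS mulN1r.
by rewrite [in RHS](cardsD1 x S) xS exprS mulN1r opprK.
Qed.

End Toggle.

Section Between.
Context {d : Order.disp_t} {T : finPOrderType d}.
Local Open Scope order_scope.
Implicit Types (A B I J S W : {set T}) (x y : T).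

Definition between S : {set T} :=
  [set y | [exists a in S, exists c in S, (a < y) && (y < c)]].

Lemma betweenP S y :
  reflect (exists a c, [/\ a \in S, c \in S, a < y & y < c]) (y \in between S).
Proof.
rewrite inE; apply: (iffP exists_inP) => [[a aS /exists_inP[c cS /andP[ay yc]]]|].
  by exists a, c.
by case=> a [c [aS cS ay yc]]; exists a => //; apply/exists_inP; exists c; rewrite ?ay.
Qed.

Lemma betweenS {A B} : A \subset B -> between A \subset between B.
Proof.
move=> /subsetP AB; apply/subsetP => y /betweenP[a [c [aA cA ay yc]]].
by apply/betweenP; exists a, c; rewrite !AB.
Qed.

Lemma mem_between_setU1 S x : (x \in between (x |: S)) = (x \in between S).
Proof.
apply/idP/idP; last exact/subsetP/betweenS/subsetUr.
case/betweenP=> a [c []]; rewrite !in_setU1.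
move=> /predU1P[->|aS] /predU1P[->|cS] ax xc; rewrite ?ltxx // in ax xc.
by apply/betweenP; exists a, c.
Qed.

Lemma between_setU1 S x : x \in between S -> between (x |: S) = between S.
Proof.
case/betweenP=> a [c [aS cS ax xc]].
apply/eqP; rewrite eqEsubset (betweenS (subsetUr _ _)) andbT.
apply/subsetP => y /betweenP[a' [c' []]]; rewrite !in_setU1 => a'S c'S ay yc.
apply/betweenP; exists (if a' == x then a else a'), (if c' == x then c else c').
case: eqP a'S ay => [-> _ xy|_ /= -> ay]; case: eqP c'S yc => [-> _ yx|_ /= -> yc];
  by split; rewrite // ?(lt_trans ax) ?(lt_trans _ xc).
Qed.

Lemma interiorE S : interior S = S :&: between S.
Proof.
apply/setP => y; rewrite in_setI [y \in interior S]inE; congr (_ && _).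
apply/existsP/betweenP => [[a /existsP[c /and4P[? ? ? ?]]]|[a [c [? ? ? ?]]]].
  by exists a, c.
by exists a; apply/existsP; exists c; apply/and4P.
Qed.

Lemma order_idealP I : reflect (forall x y, x \in I -> y <= x -> y \in I) (order_ideal I).
Proof.
apply: (iffP forallP) => [I_ x y xI yx | I_ x]; last first.
  by apply/forallP => y; apply/implyP => /andP[]; exact: I_.
by have /forallP/(_ y)/implyP := I_ x; apply; rewrite xI yx.
Qed.

Lemma order_filterP J : reflect (forall x y, x \in J -> x <= y -> y \in J) (order_filter J).
Proof.
apply: (iffP forallP) => [J_ x y xJ xy | J_ x]; last first.
  by apply/forallP => y; apply/implyP => /andP[]; exact: J_.
by have /forallP/(_ y)/implyP := J_ x; apply; rewrite xJ xy.
Qed.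

Lemma ds_convexE S : ds_convex S = (between S \subset S).
Proof.
apply/existsP/subsetP => [[I /existsP[J /and3P[/order_idealP I_ /order_filterP J_ /eqP ->]]]|].
  move=> y /betweenP[a [c []]]; rewrite !inE !negb_or => /andP[aI aJ] /andP[cI cJ] ay yc.
  apply/andP; split; [apply: contraNN aI => /I_ | apply: contraNN cJ => /J_]; apply; exact: ltW.
move=> convS.
pose I := [set y | [forall s in S, ~~ (s <= y)]].
pose J := [set y | (y \notin S) && [exists s in S, s <= y]].
exists I; apply/existsP; exists J; apply/and3P; split.
- apply/order_idealP => x y; rewrite !inE => /forall_inP xI yx; apply/forall_inP => s sS.
  by apply: contra (xI s sS) => sy; exact: le_trans yx.
- apply/order_filterP => x y; rewrite !inE => /andP[xS /exists_inP[s sS sx]] xy.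
  rewrite andbC; apply/andP; split; first by apply/exists_inP; exists s; rewrite // (le_trans sx).
  apply: contra xS => yS.
  have [<-|sx'] := eqVneq s x; first exact: sS.
  have [->|xy'] := eqVneq x y; first exact: yS.
  by apply: convS; apply/betweenP; exists s, y; rewrite !lt_neqAle sx' xy' sx xy.
- apply/eqP/setP => y; rewrite !inE -negb_exists_in.
  case: (boolP (y \in S)) => yS /=; last by case: [exists _ in _, _].
  by rewrite orbF negbK; apply/esym/exists_inP; exists y.
Qed.

Definition flat W S := (S \subset W) && [disjoint between S & W].

Definition lower W S := [set y in W | [exists s in S, y < s]].

Lemma lowerP W S y :
  reflect (y \in W /\ exists2 s, s \in S & y < s) (y \in lower W S).
Proof.
rewrite inE; apply: (iffP andP) => [[yW /exists_inP[s sS ys]]|[yW [s sS ys]]].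
  by split=> //; exists s.
by split=> //; apply/exists_inP; exists s.
Qed.

Lemma flatT S : flat setT S = (between S == set0).
Proof. by rewrite /flat subsetT -setI_eq0 setIT. Qed.

Lemma flat_subset W A S : A \subset S -> flat W S -> flat W A.
Proof.
move=> AS /andP[SW disjS]; rewrite /flat (subset_trans AS SW).
exact: disjointWl (betweenS AS) disjS.
Qed.

Lemma flat_sub W W' S : W' \subset W -> W :&: between W' \subset W' ->
  flat W' S = flat W S && (S \subset W').
Proof.
move=> W'W convW'; rewrite /flat; case: (boolP (S \subset W')) => SW'; last by rewrite andbF.
rewrite (subset_trans SW' W'W) andbT -!setI_eq0.
suff -> : between S :&: W = between S :&: W' by [].
apply/eqP; rewrite eqEsubset (setIS _ W'W) andbT; apply/subsetP => y; rewrite !in_setI.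
case/andP=> yS yW; rewrite yS (subsetP convW') // in_setI yW.
exact: subsetP (betweenS SW') y yS.
Qed.

Lemma flat_lower0 W S : S \subset W -> lower W S = set0 -> flat W S.
Proof.
move=> SW S0; rewrite /flat SW -setI_eq0; apply/eqP/setP => y; rewrite in_setI in_set0.
apply/negbTE/andP => -[/betweenP[a [c [_ cS _ yc]]] yW].
suff: y \in lower W S by rewrite S0 in_set0.
by apply/lowerP; split=> //; exists c.
Qed.

Lemma flat_setU1 W S e : flat W S -> e \in lower W S ->
  (forall y, y \in lower W S -> ~~ (e < y)) -> flat W (e |: S).
Proof.
move=> /andP[SW disjS] /lowerP[eW [s sS es]] emax.
rewrite /flat subUset sub1set eW SW -setI_eq0; apply/eqP/setP => y.
rewrite in_setI in_set0; apply/negbTE/andP => -[/betweenP[a [c [+ + ay yc]]] yW].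
have yS : y \notin between S by rewrite (disjointFl disjS yW).
rewrite !in_setU1 => /predU1P[ae|aS] /predU1P[ce|cS]; subst.
- by have := lt_trans ay yc; rewrite ltxx.
- have: y \in lower W S by apply/lowerP; split=> //; exists c.
  by move/emax; rewrite ay.
- by case/betweenP: yS; exists a, s; split=> //; exact: lt_trans es.
- by case/betweenP: yS; exists a, c.
Qed.

Lemma lower_toggle W S e : e \in lower W S -> lower W (toggle S e) = lower W S.
Proof.
case/lowerP=> _ [s sS es]; have se : s != e by apply: contraTneq es => ->; rewrite ltxx.
apply/setP => y; apply/lowerP/lowerP => -[yW [t]]; rewrite ?inE => tS yt; split=> //.
  case: eqVneq tS yt => [-> _ ye|_ /= tS yt]; last by exists t.
  by exists s => //; exact: lt_trans es.
case: (eqVneq t e) => [te|te]; last by exists t; rewrite // inE (negbTE te).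
by exists s; [rewrite inE (negbTE se) | rewrite (lt_trans yt) // te].
Qed.

Lemma lower_toggle_min W S m : (forall y, y \in W -> ~~ (y < m)) ->
  lower W S = set0 -> lower W (toggle S m) = set0.
Proof.
move=> mmin S0; apply/setP => y; rewrite in_set0; apply/negbTE/lowerP => -[yW [t]].
rewrite inE; case: eqVneq => [-> _|_ /= tS yt]; first exact/negP/mmin.
suff: y \in lower W S by rewrite S0 in_set0.
by apply/lowerP; split=> //; exists t.
Qed.

Lemma sum_flat W : (\sum_(S | flat W S) sgn S = (W == set0)%:R)%R.
Proof.
have [->|[m mW]] := set_0Vmem W.
  rewrite eqxx (big_pred1 set0) ?cards0 // => S.
  by rewrite /flat subset0 -setI_eq0 setI0 eqxx andbT.
rewrite (_ : W == set0 = false); last by apply/negbTE/set0Pn; exists m.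
have [m0 m0W m0min] : exists2 m0, m0 \in W & forall y, y \in W -> ~~ (y < m0).
  apply: (@exists_maximal _ (fun x y => y < x)) => [x|y x z|]; rewrite ?ltxx //.
    by move=> xy zx; exact: lt_trans zx xy.
  by apply/set0Pn; exists m.
(* The pivot depends on [S] only through [lower W S], which toggling preserves. *)
pose pivot B := odflt m0 [pick e in B | [forall y in B, ~~ (e < y)]].
have pivotP S : flat W S ->
    flat W (toggle S (pivot (lower W S))) /\ lower W (toggle S (pivot (lower W S))) = lower W S.
  move=> flatS; rewrite /pivot; case: pickP => [e /andP[eL /forall_inP emax]|nomax] /=.
    split; last exact: lower_toggle.
    rewrite toggleE; case: ifP => eS; last exact: flat_setU1.
    by apply: flat_subset flatS; exact: subsetDl.
  have L0 : lower W S = set0.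
    apply: contraTeq isT => /(@exists_maximal _ <%O _ ltxx lt_trans)[e eL emax].
    by have /negbT := nomax e; rewrite /= eL => /forall_inPn[y yL /negP[]]; exact: emax.
  have L0' := lower_toggle_min _ _ _ m0min L0; split; last by rewrite L0 L0'.
  apply: flat_lower0 L0'; apply/subsetP => y; rewrite inE.
  case: eqVneq => [-> //|_ /=]; exact/subsetP/(andP flatS).1.
apply: (@sumr_sign_reversing _ _ _ _ (fun S => toggle S (pivot (lower W S)))).
- by move=> S /pivotP[].
- by move=> S /pivotP[_ ->]; rewrite toggleK.
- by move=> S _; exact: signr_toggle.
Qed.

Lemma sum_flat_mem W x : x \in W -> x \notin between W ->
  (\sum_(S | flat W S && (x \in S)) sgn S = - (W :\ x == set0)%:R)%R.
Proof.
move=> xW xW'; have := sum_flat W; rewrite (bigID (fun S => x \in S)) /=.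
rewrite (_ : W == set0 = false); last by apply/negbTE/set0Pn; exists x.
move/eqP; rewrite addr_eq0 => /eqP ->; congr (- _)%R; rewrite -sum_flat.
have convWx : W :&: between (W :\ x) \subset W :\ x.
  apply/subsetP => y /setIP[yW yb]; rewrite in_setD1 yW andbT.
  by apply: contraNneq xW' => <-; exact: subsetP (betweenS (subsetDl _ _)) y yb.
apply: eq_bigl => S; rewrite (flat_sub _ _ S (subsetDl W [set x]) convWx) subsetD1.
by case: (boolP (flat W S)) => // /andP[->].
Qed.

Lemma sum_flatT_mem_sub W x : between W \subset W -> x \in W -> x \notin between W ->
  (\sum_(S | flat setT S && (x \in S) && (S \subset W)) sgn S = - (W :\ x == set0)%:R)%R.
Proof.
move=> convW xW xW'; rewrite -sum_flat_mem //; apply: eq_bigl => S.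
by rewrite (flat_sub _ _ S (subsetT W)) ?setTI // andbAC.
Qed.

Lemma convex_interior1E x S :
  ds_convex S && (interior S == [set x]) = (x \in S) && (between S == [set x]).
Proof.
rewrite ds_convexE interiorE; apply/andP/andP => [[convS /eqP intS]|[xS /eqP bS]].
  have xS : x \in S by have := set11 x; rewrite -intS => /setIP[].
  by split=> //; rewrite -intS (setIidPr convS).
by rewrite bS sub1set xS (setIidPr _) ?sub1set.
Qed.

Lemma between_setU1_eq1 S x : (between (x |: S) == [set x]) = (between S == [set x]).
Proof.
have [xS|xS] := boolP (x \in between S); first by rewrite between_setU1.
have notx A : x \notin between A -> (between A == [set x]) = false.
  by move=> xA; apply: contraNF xA => /eqP ->; rewrite set11.
by rewrite !notx // mem_between_setU1.
Qed.

Lemma sum_between_eq1_mem x :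
  (\sum_(S : {set T} | (x \in S) && (between S == [set x])) sgn S
   = - \sum_(S : {set T} | (x \notin S) && (between S == [set x])) sgn S)%R.
Proof.
rewrite (reindex_onto (fun S => x |: S) (fun S => S :\ x)) /= -?sumrN; last first.
  by move=> S /andP[xS _]; exact: setD1K.
have predE S : (x \in x |: S) && (between (x |: S) == [set x]) && ((x |: S) :\ x == S)
    = (x \notin S) && (between S == [set x]).
  rewrite setU11 between_setU1_eq1 andbC; congr (_ && _).
  have [xS|xS] := boolP (x \in S); last by rewrite setU1K ?eqxx.
  by apply/negbTE; apply: contraL xS => /eqP <-; rewrite setD11.
apply: eq_big => [S|S]; rewrite predE // => /andP[xS _].
by rewrite cardsU1 xS exprS mulN1r.
Qed.

Lemma sum_between_eq1_notin x :
  (\sum_(S : {set T} | (x \notin S) && (between S == [set x])) sgn S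
   = (~: [set x] == set0)%:R + \sum_(S | flat setT S && (x \in S)) sgn S)%R.
Proof.
have x0 : ([set x] == set0) = false by apply: contraTF (set11 x) => /eqP ->; rewrite inE.
have E1 : (\sum_(S | flat (~: [set x]) S) sgn S
    = \sum_(S : {set T} | (x \notin S) && (between S == [set x])) sgn S
    + \sum_(S | flat setT S && (x \notin S)) sgn S)%R.
  rewrite (bigID (fun S => between S == [set x])) /=; congr (_ + _)%R; apply: eq_bigl => S;
    rewrite ?flatT /flat subsetC sub1set inE -setI_eq0 -setDE setD_eq0 subset1;
    by case: eqP => [->|]; rewrite ?x0 ?andbT ?andbF // andbC.
have := sum_flat setT; rewrite (bigID (fun S => x \in S)) /=.
rewrite (_ : setT == set0 = false); last by apply/negbTE/set0Pn; exists x.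
move/eqP; rewrite addr_eq0 => /eqP ->; rewrite -sum_flat E1.
by rewrite addrK.
Qed.

Definition not_below x := [set y | ~~ (y < x)].
Definition not_above x := [set y | ~~ (x < y)].

Lemma between_not_below x : between (not_below x) \subset not_below x.
Proof.
apply/subsetP => y /betweenP[a [c []]]; rewrite !inE => ax _ ay _.
by apply: contra ax; exact: lt_trans.
Qed.

Lemma between_not_above x : between (not_above x) \subset not_above x.
Proof.
apply/subsetP => y /betweenP[a [c []]]; rewrite !inE => _ xc _ yc.
by apply: contra xc => /lt_trans; apply.
Qed.

Lemma notin_between_not_below x : x \notin between (not_below x).
Proof. by apply/betweenP => -[a [c []]]; rewrite inE => /negP. Qed.

Lemma notin_between_not_above x : x \notin between (not_above x).
Proof. by apply/betweenP => -[a [c [_]]]; rewrite inE => /negP. Qed.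

Lemma betweenI A B : between (A :&: B) \subset between A :&: between B.
Proof. by rewrite subsetI !betweenS ?subsetIl ?subsetIr. Qed.

Lemma flatT_mem_sub x S : flat setT S -> x \in S ->
  (S \subset not_below x) || (S \subset not_above x).
Proof.
rewrite flatT => /eqP bS xS; apply: contraT; rewrite negb_or.
case/andP=> /subsetPn[a aS /[!inE] /negbNE ax] /subsetPn[c cS /[!inE] /negbNE xc].
suff: x \in between S by rewrite bS in_set0.
by apply/betweenP; exists a, c.
Qed.

Lemma sum_flatT_mem x :
  (\sum_(S | flat setT S && (x \in S)) sgn S
   = ((not_below x :&: not_above x) :\ x == set0)%:R
     - (not_below x :\ x == set0)%:R - (not_above x :\ x == set0)%:R)%R.
Proof.
have xb : x \in not_below x by rewrite inE ltxx.
have xa : x \in not_above x by rewrite inE ltxx.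
have xba : x \in not_below x :&: not_above x by rewrite inE xb xa.
have conv_ba : between (not_below x :&: not_above x) \subset not_below x :&: not_above x.
  exact: subset_trans (betweenI _ _) (setISS (between_not_below x) (between_not_above x)).
have xba' : x \notin between (not_below x :&: not_above x).
  apply: contra (notin_between_not_below x) => /(subsetP (betweenI _ _)).
  by rewrite in_setI => /andP[].
rewrite (eq_bigl (fun S => flat setT S && (x \in S)
    && ((S \subset not_below x) || (S \subset not_above x)))); last first.
  move=> S /=; case: (boolP (flat _ _ && _)) => // /andP[flatS xS].
  by rewrite (flatT_mem_sub x S flatS xS).
rewrite (sumr_orb _ _ (fun S => flat setT S && (x \in S))) /=.
rewrite [X in (_ - X)%R](eq_bigl (fun S => flat setT S && (x \in S)
    && (S \subset not_below x :&: not_above x))); last by move=> S; rewrite subsetI andbA.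
rewrite !sum_flatT_mem_sub ?between_not_below ?between_not_above
  ?notin_between_not_below ?notin_between_not_above //.
by rewrite opprK addrC addrA.
Qed.

Lemma setC1_eq0 x :
  (~: [set x] == set0) = (not_below x :\ x == set0) && (not_above x :\ x == set0).
Proof.
rewrite -setU_eq0; congr (_ == _); apply/setP => y; rewrite !inE.
by case: eqVneq => //= _; case: (boolP (y < x)) => //= /lt_gtF ->.
Qed.

Lemma bottleneckE x : bottleneck x =
  [&& (not_below x :&: not_above x) :\ x == set0,
      not_below x :\ x != set0 & not_above x :\ x != set0].
Proof.
have incmpE y : (y \in (not_below x :&: not_above x) :\ x) = ~~ (x >=< y).
  rewrite !inE /Order.comparable !le_eqVlt eq_sym.
  by case: (x == y); case: (y < x); case: (x < y).
rewrite /bottleneck.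
have -> : [forall y, x >=< y] = ((not_below x :&: not_above x) :\ x == set0).
  apply/forallP/eqP => [cmp|/setP N0 y]; last by have := N0 y; rewrite incmpE inE => /negbFE.
  by apply/setP => y; rewrite incmpE cmp inE.
rewrite andbC; case: eqP => //= /setP N0.
have cmp y : y != x -> ~~ (y < x) -> x < y.
  by move=> yx; have := N0 y; rewrite !inE yx /=; case: (y < x); case: (x < y).
rewrite andbC; congr (_ && _); apply/existsP/set0Pn => -[y].
- by move=> xy; exists y; rewrite !inE (gt_eqF xy) (lt_gtF xy).
- by rewrite !inE => /andP[yx /(cmp y yx) xy]; exists y.
- by move=> yx; exists y; rewrite !inE (lt_eqF yx) (lt_gtF yx).
- rewrite !inE => /andP[yx nxy]; exists y; apply: contraNT nxy => nyx.
  exact: cmp.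
Qed.

Lemma sum_convex_interior1 x :
  (\sum_(S | ds_convex S && (interior S == [set x])) sgn S = - (bottleneck x)%:R)%R.
Proof.
rewrite (eq_bigl _ _ (convex_interior1E x)) sum_between_eq1_mem sum_between_eq1_notin.
rewrite sum_flatT_mem setC1_eq0 bottleneckE.
have DN : (not_below x :\ x == set0) ==> ((not_below x :&: not_above x) :\ x == set0).
  by apply/implyP; rewrite -!subset0 => /(subset_trans _); apply; rewrite setSD ?subsetIl.
have UN : (not_above x :\ x == set0) ==> ((not_below x :&: not_above x) :\ x == set0).
  by apply/implyP; rewrite -!subset0 => /(subset_trans _); apply; rewrite setSD ?subsetIr.
move: DN UN.
by case: (not_below x :\ x == set0); case: (not_above x :\ x == set0);
  case: (_ :\ x == set0).
Qed.

End Between.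

Local Open Scope ring_scope.

Theorem theorem4p9 (d : Order.disp_t) (T : finPOrderType d) :
  \sum_(S : {set T} | ds_convex S && (#|interior S| == 1)%N)
     (-1 : int) ^+ #|S| = - (#|@bottlenecks d T|%:Z).
Proof.
have -> : \sum_(S : {set T} | ds_convex S && (#|interior S| == 1)%N) sgn S
        = \sum_(x : T) \sum_(S | ds_convex S && (interior S == [set x])) sgn S.
  rewrite (exchange_big_dep (fun S => ds_convex S && (#|interior S| == 1)%N)) /=; last first.
    by move=> x S _ /andP[-> /eqP ->]; rewrite cards1.
  apply: eq_bigr => S /andP[convS /cards1P[y intS]].
  by rewrite (big_pred1 y) // => z /=; rewrite convS intS (inj_eq set1_inj) eq_sym.
rewrite (eq_bigr _ (fun x _ => sum_convex_interior1 x)) sumrN -natr_sum natz.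
rewrite /bottlenecks -sum1dep_card [in RHS]big_mkcond /=.
by congr (- Posz _); apply: eq_bigr => x _; case: bottleneck.
Qed.
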